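(* Let $U,V\in\mathbb{R}^{3\times3}$ be symmetric positive definite with $U\neq V$, $UV=VU$, and $V=RUR^T$ for some $R\in SO(3)$. Suppose the eigenvalues of $U$ satisfy $0<\lambda_1<\lambda_2=1<\lambda_3$, that $U$ and $V$ have a common eigenvector for the eigenvalue $1$, and that $$\lambda_3=\sqrt{2-\lambda_1^2}.$$ Then there exist rotations $R_u^{+},R_v^{+},R_u^{-},R_v^{-}\in SO(3)$, vectors $b_u^{\pm},b_v^{\pm}\in\mathbb{R}^3$ and unit vectors $\hat m^{+},\hat m^{-}$ with $\hat m^{+}\nparallel\hat m^{-}$ such that, for each sign, $$R_u^{\pm}U-I=b_u^{\pm}\otimes\hat m^{\pm},\qquad R_v^{\pm}V-I=b_v^{\pm}\otimes\hat m^{\pm},$$ and hence $R_u^{\pm}U-R_v^{\pm}V=(b_u^{\pm}-b_v^{\pm})\otimes\hat m^{\pm}$. That is, $U$, $V$ and the identity form two distinct planar triple clusters in which the three pairwise differences are rank-one with a common normal.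
   Context: Here $I$ is the identity matrix (representing austenite) and $SO(3)$ the rotation group. *)

From HB Require Import structures.
From mathcomp Require Import all_boot all_order all_algebra.
From mathcomp Require Import reals.
Set Implicit Arguments. Unset Strict Implicit. Unset Printing Implicit Defensive.
Import Order.TTheory GRing.Theory Num.Theory.
Local Open Scope ring_scope.

Section Defs.
Variable R : realType.

Definition symmetric3 (A : 'M[R]_3) : Prop := A^T = A.

Definition posdef3 (A : 'M[R]_3) : Prop :=
  forall v : 'cV[R]_3, v != 0 -> 0 < (v^T *m A *m v) 0 0.

Definition spd3 (A : 'M[R]_3) : Prop := symmetric3 A /\ posdef3 A.

Definition SO3 (Q : 'M[R]_3) : Prop := Q^T *m Q = 1%:M /\ \det Q = 1.

Definition is_eigenvalue3 (A : 'M[R]_3) (a : R) : Prop :=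
  exists v : 'cV[R]_3, v != 0 /\ A *m v = a *: v.

Definition unit_vec3 (m : 'cV[R]_3) : Prop := (m^T *m m) 0 0 = 1.

Definition parallel3 (a b : 'cV[R]_3) : Prop :=
  exists c : R, a = c *: b \/ b = c *: a.

Definition tensor3 (b m : 'cV[R]_3) : 'M[R]_3 := b *m m^T.
End Defs.

From HB Require Import structures.
From mathcomp Require Import all_boot all_order all_algebra.
From mathcomp Require Import reals.
From mathcomp Require Import ring lra.
Import Order.TTheory GRing.Theory Num.Theory.
Local Open Scope ring_scope.
Set Implicit Arguments. Unset Strict Implicit. Unset Printing Implicit Defensive.

(* In an orthonormal eigenframe of U we have U = diag(l1,1,l3), the common fixed
   vector of U and V spanning the middle axis.  Since V commutes with U, whose
   eigenvalues are distinct, V is diagonal in the same frame with middle entry 1;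
   being conjugate to U it has the same trace and the same trace of its square,
   which forces V = diag(l3,1,l1) as V <> U.
   For D = diag(a,1,c) with a^2 + c^2 = 2 and k = +-1, D maps w = (k,0,1) to a
   vector of the same length sqrt 2, so a rotation R about e2 brings D w back to w.
   Then R D - I kills w and e2, i.e. it is rank one with normal (1,0,-k).  This
   normal does not involve (a,c), so it serves U and V (a and c swapped) alike,
   and the two signs of k give non-parallel normals. *)

Section OrthonormalFrames.
Variables (R : rcfType) (n : nat).
Implicit Types (x y : 'cV[R]_n) (A : 'M[R]_n).

Definition dotv x y := (x^T *m y) 0 0.

Lemma dotvZl a x y : dotv (a *: x) y = a * dotv x y.
Proof. by rewrite /dotv linearZ /= -scalemxAl mxE. Qed.

Lemma dotvZr a x y : dotv x (a *: y) = a * dotv x y.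
Proof. by rewrite /dotv -scalemxAr mxE. Qed.

Lemma dotv_gt0 x : x != 0 -> 0 < dotv x x.
Proof.
apply: contraNT; rewrite -leNgt => hx; apply/eqP/matrixP => i j.
have sq_ge0 k : 0 <= x^T 0 k * x k 0 by rewrite mxE -expr2 sqr_ge0.
have : dotv x x = 0 by apply/le_anti; rewrite hx /dotv mxE sumr_ge0.
rewrite /dotv mxE => /(psumr_eq0P (fun k _ => sq_ge0 k)) /(_ i isT) /eqP.
by rewrite mxE mulf_eq0 orbb (ord1 j) !mxE => /eqP.
Qed.

Lemma dotv_sym_eigen A x y p q : A^T = A ->
  A *m x = p *: x -> A *m y = q *: y -> p != q -> dotv x y = 0.
Proof.
move=> sA hx hy pq; have : dotv (A *m x) y = dotv x (A *m y).
  by rewrite /dotv trmx_mul sA mulmxA.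
rewrite hx hy dotvZl dotvZr => /eqP; rewrite -subr_eq0 -mulrBl mulf_eq0.
by rewrite subr_eq0 (negbTE pq) => /eqP.
Qed.

Definition normalize x := (Num.sqrt (dotv x x))^-1 *: x.

Lemma dotv_normalize x : x != 0 -> dotv (normalize x) (normalize x) = 1.
Proof.
move=> /dotv_gt0 hx; rewrite /normalize dotvZl dotvZr mulrA -expr2 exprVn.
by rewrite sqr_sqrtr ?mulVf ?ltW ?gt_eqF.
Qed.

Lemma normalize_eigen A x p :
  A *m x = p *: x -> A *m normalize x = p *: normalize x.
Proof. by move=> h; rewrite /normalize -scalemxAr h !scalerA mulrC. Qed.

Definition colsmx (g : 'I_n -> 'cV[R]_n) : 'M[R]_n := \matrix_(i, j) g j i 0.

Lemma colsmx_conjE g A j k :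
  ((colsmx g)^T *m A *m colsmx g) j k = dotv (g j) (A *m g k).
Proof.
rewrite -mulmxA /dotv !mxE; apply: eq_bigr => i _; rewrite !mxE; congr (_ * _).
by apply: eq_bigr => l _; rewrite !mxE.
Qed.

Lemma colsmx_eigen g A (d : 'rV[R]_n) : (forall j, A *m g j = d 0 j *: g j) ->
  A *m colsmx g = colsmx g *m diag_mx d.
Proof.
move=> hg; apply/matrixP => i j; rewrite mul_mx_diag !mxE.
have -> : \sum_l A i l * colsmx g l j = (A *m g j) i 0.
  by rewrite mxE; apply: eq_bigr => l _; rewrite !mxE.
by rewrite hg !mxE mulrC.
Qed.

Definition eigenframe g := colsmx (fun j => normalize (g j)).

Section Eigenframe.
Variables (A : 'M[R]_n) (d : 'rV[R]_n) (g : 'I_n -> 'cV[R]_n).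
Hypotheses (sA : A^T = A) (d_inj : injective (d 0)) (g_neq0 : forall j, g j != 0).
Hypothesis g_eigen : forall j, A *m g j = d 0 j *: g j.

Lemma eigenframe_orth : (eigenframe g)^T *m eigenframe g = 1%:M.
Proof.
apply/matrixP => j k; rewrite -[_^T]mulmx1 colsmx_conjE mul1mx mxE.
have [<-|jk] := eqVneq j k; first by rewrite dotv_normalize.
rewrite /= mulr0n.
apply: (dotv_sym_eigen sA (normalize_eigen (g_eigen j)) (normalize_eigen (g_eigen k))).
by apply: contra jk => /eqP /d_inj ->.
Qed.

Lemma eigenframe_diag : A = eigenframe g *m diag_mx d *m (eigenframe g)^T.
Proof.
rewrite -(colsmx_eigen (fun j => normalize_eigen (g_eigen j))).
by rewrite -mulmxA (mulmx1C eigenframe_orth) mulmx1.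
Qed.

End Eigenframe.
End OrthonormalFrames.

Section OrthogonalConjugation.
Variables (R : comUnitRingType) (n : nat).
Implicit Types (O D E : 'M[R]_n).

Lemma orth_conjM O D E : O^T *m O = 1%:M ->
  (O *m D *m O^T) *m (O *m E *m O^T) = O *m (D *m E) *m O^T.
Proof. by move=> hO; rewrite !mulmxA -(mulmxA _ O^T O) hO mulmx1. Qed.

Lemma mxtrace_orth_conj O D : O^T *m O = 1%:M -> \tr (O *m D *m O^T) = \tr D.
Proof. by move=> hO; rewrite mxtrace_mulC mulmxA hO mul1mx. Qed.

Lemma orth_conjK O D : O^T *m O = 1%:M -> O^T *m (O *m D *m O^T) *m O = D.
Proof. by move=> hO; rewrite !mulmxA hO mul1mx -mulmxA hO mulmx1. Qed.

Lemma orth_conjB1 O D :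
  O^T *m O = 1%:M -> O *m (D - 1%:M) *m O^T = O *m D *m O^T - 1%:M.
Proof. by move=> hO; rewrite mulmxBr mulmxBl mulmx1 (mulmx1C hO). Qed.

Lemma orth_mul O1 O2 : O1^T *m O1 = 1%:M -> O2^T *m O2 = 1%:M ->
  (O1 *m O2)^T *m (O1 *m O2) = 1%:M.
Proof. by move=> h1 h2; rewrite trmx_mul mulmxA -(mulmxA _ O1^T) h1 mulmx1 h2. Qed.

End OrthogonalConjugation.

Lemma commute_diag_injective (R : idomainType) n (d : 'rV[R]_n) (W : 'M[R]_n) :
  injective (d 0) -> diag_mx d *m W = W *m diag_mx d -> W = diag_mx (\row_i W i i).
Proof.
move=> d_inj dW; apply/matrixP => i j; rewrite !mxE.
have [<-|ij] := eqVneq i j; first by rewrite mulr1n.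
have /eqP := congr1 (fun M : 'M_n => M i j) dW.
rewrite mul_diag_mx mul_mx_diag !mxE mulrC -subr_eq0 -mulrBr mulf_eq0 subr_eq0.
have /negbTE -> : d 0 i != d 0 j by apply: contra ij => /eqP /d_inj ->.
by rewrite orbF mulr0n => /eqP.
Qed.

Lemma eq_power_sums2 (R : numDomainType) (a b c e : R) :
  a + b = c + e -> a ^+ 2 + b ^+ 2 = c ^+ 2 + e ^+ 2 ->
  (a = c /\ b = e) \/ (a = e /\ b = c).
Proof.
move=> s1 s2; have hb : b = c + e - a by rewrite -s1 addrAC subrr add0r.
have : 2 * ((a - c) * (a - e)) = (a ^+ 2 + b ^+ 2) - (c ^+ 2 + e ^+ 2).
  by rewrite hb; ring.
rewrite s2 subrr => /eqP; rewrite !mulf_eq0 pnatr_eq0 !subr_eq0 /=.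
case/orP => /eqP ha; [left | right]; split=> //; rewrite hb ha; ring.
Qed.

Section ThreeByThree.
Variable R : realType.

Definition diag3 (a b c : R) : 'M[R]_3 := diag_mx (\row_j [:: a; b; c]`_j).
Definition cv3 (x y z : R) : 'cV[R]_3 := \col_i [:: x; y; z]`_i.

Lemma diag3_entries_injective (a b c : R) : a != b -> a != c -> b != c ->
  injective ((\row_j [:: a; b; c]`_j : 'rV[R]_3) 0).
Proof.
move=> ab ac bc [[|[|[|i]]] hi] // [[|[|[|j]]] hj] //; rewrite !mxE /= => e;
  apply: val_inj => //=; exfalso; move/eqP: e; apply/negP; by rewrite // eq_sym.
Qed.

Lemma mxtrace_diag3 a b c : \tr (diag3 a b c) = a + b + c.
Proof. by rewrite mxtrace_diag !big_ord_recl big_ord0 !mxE /= addr0 addrA. Qed.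

Lemma diag3M a b c a' b' c' :
  diag3 a b c *m diag3 a' b' c' = diag3 (a * a') (b * b') (c * c').
Proof.
rewrite mulmx_diag; congr diag_mx; apply/matrixP => i [[|[|[|j]]] hj] //.
all: by rewrite !mxE.
Qed.

Lemma orth_conj_diag3_spectrum (O : 'M[R]_3) a c w0 w2 : O^T *m O = 1%:M ->
  diag3 w0 1 w2 = O *m diag3 a 1 c *m O^T -> (w0 = a /\ w2 = c) \/ (w0 = c /\ w2 = a).
Proof.
move=> hO hW; apply: eq_power_sums2.
  have := mxtrace_orth_conj (diag3 a 1 c) hO.
  by rewrite -hW !mxtrace_diag3 !(addrAC _ 1) => /addIr.
have := mxtrace_orth_conj (diag3 a 1 c *m diag3 a 1 c) hO.
rewrite -orth_conjM // -hW !diag3M !mxtrace_diag3 !(addrAC _ (1 * 1)) !expr2.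
by move=> /addIr.
Qed.

Lemma commuting_conjugates_frame (U V Q : 'M[R]_3) (a c : R) :
  U^T = U -> U != V -> U *m V = V *m U -> Q^T *m Q = 1%:M -> V = Q *m U *m Q^T ->
  a != 1 -> c != 1 -> a != c -> is_eigenvalue3 U a -> is_eigenvalue3 U c ->
  (exists e : 'cV[R]_3, e != 0 /\ U *m e = e /\ V *m e = e) ->
  exists2 P : 'M[R]_3, P^T *m P = 1%:M &
    U = P *m diag3 a 1 c *m P^T /\ V = P *m diag3 c 1 a *m P^T.
Proof.
move=> sU neqUV cUV hQ hV a1 c1 ac [v1 [v1_neq0 Uv1]] [v3 [v3_neq0 Uv3]].
move=> [e [e_neq0 [Ue Ve]]].
pose d : 'rV[R]_3 := \row_j [:: a; 1; c]`_j.
pose g (j : 'I_3) : 'cV[R]_3 := [:: v1; e; v3]`_j.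
have d_inj : injective (d 0) by apply: diag3_entries_injective; rewrite // eq_sym.
have g_neq0 j : g j != 0 by case: j => [[|[|[|j]]] hj].
have g_eigen j : U *m g j = d 0 j *: g j.
  by case: j => [[|[|[|j]]] hj] //; rewrite mxE //= scale1r.
set P := eigenframe g.
have hP : P^T *m P = 1%:M := eigenframe_orth sU d_inj g_neq0 g_eigen.
have hU : U = P *m diag3 a 1 c *m P^T := eigenframe_diag sU d_inj g_neq0 g_eigen.
pose W := P^T *m V *m P.
have hVW : V = P *m W *m P^T.
  by rewrite !mulmxA (mulmx1C hP) mul1mx -mulmxA (mulmx1C hP) mulmx1.
have W11 : W 1 1 = 1.
  by rewrite colsmx_conjE (normalize_eigen (p := 1)) ?scale1r ?dotv_normalize.
have hPt : P^T^T *m P^T = 1%:M by rewrite trmxK (mulmx1C hP).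
have hWconj : W = (P^T *m Q *m P) *m diag3 a 1 c *m (P^T *m Q *m P)^T.
  by rewrite /W hV hU !trmx_mul trmxK !mulmxA.
clearbody W.
have W_comm : diag_mx d *m W = W *m diag_mx d.
  have : P *m (diag_mx d *m W) *m P^T = P *m (W *m diag_mx d) *m P^T.
    by rewrite -!orth_conjM // -hU -hVW cUV.
  by move/(congr1 (fun M => P^T *m M *m P)); rewrite !orth_conjK.
have W_diag : W = diag3 (W 0 0) 1 (W 2 2).
  rewrite [LHS](commute_diag_injective d_inj W_comm); congr diag_mx.
  by apply/matrixP => i [[|[|[|j]]] hj] //; rewrite (ord1 i) !mxE //= -?W11;
    congr (W _ _); apply: val_inj.
have [[w0 w2]|[w0 w2]] := orth_conj_diag3_spectrum (orth_mul (orth_mul hPt hQ) hP)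
  (etrans (esym W_diag) hWconj).
  by move: neqUV; rewrite hVW W_diag w0 w2 -hU eqxx.
by exists P; rewrite // hVW W_diag w0 w2.
Qed.

Definition mx3 (rows : seq (seq R)) : 'M[R]_3 := \matrix_(i, j) (nth [::] rows i)`_j.

(* Rotation about e2 with cosine (a+c)/2 and sine k(a-c)/2; when k^2 = 1 and
   a^2 + c^2 = 2 it maps diag(a,1,c) (k,0,1) = (ka,0,c) back to (k,0,1). *)
Definition rot2 (k a c : R) : 'M[R]_3 :=
  let C := (a + c) / 2 in let S := k * (a - c) / 2 in
  mx3 [:: [:: C; 0; - S]; [:: 0; 1; 0]; [:: S; 0; C]].

Definition unit_normal (k : R) : 'cV[R]_3 := (Num.sqrt 2)^-1 *: cv3 1 0 (- k).

Section RankOneRotation.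
Variables (k a c : R).
Hypotheses (k2 : k ^+ 2 = 1) (ac2 : a ^+ 2 + c ^+ 2 = 2).

Lemma rot2_cos_sin : ((a + c) / 2) ^+ 2 + (k * (a - c) / 2) ^+ 2 = 1.
Proof.
have -> : ((a + c) / 2) ^+ 2 + (k * (a - c) / 2) ^+ 2 =
  ((1 + k ^+ 2) * (a ^+ 2 + c ^+ 2) + 2 * (1 - k ^+ 2) * a * c) / 4 by field.
by rewrite k2 ac2 subrr; field.
Qed.

Ltac entrywise := apply/matrixP => [[[|[|[|?]]] ?]] [[|[|[|?]]] ?] //;
  rewrite !mxE ?big_ord_recl ?big_ord0 ?mxE /= ?mulr1n ?mulr0n.

Lemma rot2_orth : (rot2 k a c)^T *m rot2 k a c = 1%:M.
Proof.
have := rot2_cos_sin; rewrite !expr2 => cs.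
by entrywise; first [ring | rewrite -[RHS]cs; ring].
Qed.

Lemma det_rot2 : \det (rot2 k a c) = 1.
Proof.
rewrite (expand_det_row _ 0) !big_ord_recl big_ord0 /cofactor !mxE /=.
rewrite 3!(expand_det_row _ 0) /cofactor !big_ord_recl !big_ord0 !det_mx11 !mxE /=.
by rewrite /bump /= -[RHS]rot2_cos_sin; ring.
Qed.

Lemma rot2_rank_one : rot2 k a c *m diag3 a 1 c - 1%:M =
  cv3 ((a + c) / 2 * a - 1) 0 (k * (a - c) / 2 * a) *m (cv3 1 0 (- k))^T.
Proof.
entrywise; try ring; apply: subr0_eq.
  apply: (@etrans _ _ (k / 2 * (a ^+ 2 + c ^+ 2 - 2))); first by field.
  by rewrite ac2 subrr mulr0.
apply: (@etrans _ _ ((a ^+ 2 + c ^+ 2 - 2 + (k ^+ 2 - 1) * (a ^+ 2 - a * c)) / 2)).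
  by field.
by rewrite ac2 k2 !subrr mul0r addr0 mul0r.
Qed.

End RankOneRotation.

Lemma unit_normal_unit k : k ^+ 2 = 1 -> unit_vec3 (unit_normal k).
Proof.
move=> k2; have r2 : (Num.sqrt 2)^-1 ^+ 2 = 2^-1 :> R by rewrite exprVn sqr_sqrtr ?ler0n.
rewrite /unit_vec3 !mxE !big_ord_recl big_ord0 !mxE /=.
apply: (@etrans _ _ ((Num.sqrt 2)^-1 ^+ 2 * (1 + k ^+ 2))); first ring.
by rewrite r2 k2; field.
Qed.

Lemma unit_normals_not_parallel : ~ parallel3 (unit_normal 1) (unit_normal (-1)).
Proof.
have r0 : 0 < (Num.sqrt 2)^-1 :> R by rewrite invr_gt0 sqrtr_gt0 ltr0n.
by move=> [x [] /matrixP h]; have := h 0 0; have := h 2 0; rewrite !mxE /=; lra.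
Qed.

Lemma SO3_orth_conj (P Rt : 'M[R]_3) :
  P^T *m P = 1%:M -> SO3 Rt -> SO3 (P *m Rt *m P^T).
Proof.
move=> hP [oRt dRt]; split.
  by rewrite !trmx_mul trmxK (mulmxA P) orth_conjM // oRt mulmx1 (mulmx1C hP).
by rewrite !det_mulmx dRt mulr1 -det_mulmx (mulmx1C hP) det1.
Qed.

Lemma unit_vec3_orth (P : 'M[R]_3) m :
  P^T *m P = 1%:M -> unit_vec3 m -> unit_vec3 (P *m m).
Proof. by move=> hP; rewrite /unit_vec3 trmx_mul mulmxA -(mulmxA _ P^T) hP mulmx1. Qed.

Lemma parallel3_orth (P : 'M[R]_3) m m' : P^T *m P = 1%:M ->
  parallel3 (P *m m) (P *m m') -> parallel3 m m'.
Proof.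
move=> hP [x h]; exists x.
by case: h => /(congr1 (mulmx P^T)); rewrite -scalemxAr !mulmxA hP !mul1mx; [left | right].
Qed.

Lemma tensor3_orth_conj (P : 'M[R]_3) b m :
  P *m tensor3 b m *m P^T = tensor3 (P *m b) (P *m m).
Proof. by rewrite /tensor3 trmx_mul !mulmxA. Qed.

Lemma tensor3_scale (s : R) b m : s != 0 -> tensor3 (s *: b) (s^-1 *: m) = tensor3 b m.
Proof.
by move=> s0; rewrite /tensor3 linearZ /= -scalemxAl -scalemxAr scalerA mulfV ?scale1r.
Qed.

Lemma tensor3_connection_sub (A B : 'M[R]_3) b b' m :
  A - 1%:M = tensor3 b m -> B - 1%:M = tensor3 b' m -> A - B = tensor3 (b - b') m.
Proof. by rewrite /tensor3 mulmxBl => <- <-; rewrite opprB addrA subrK. Qed.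

Lemma orth_conj_rank_one_connection (P : 'M[R]_3) k a c :
  P^T *m P = 1%:M -> k ^+ 2 = 1 -> a ^+ 2 + c ^+ 2 = 2 ->
  exists Rt b, SO3 Rt /\
    Rt *m (P *m diag3 a 1 c *m P^T) - 1%:M = tensor3 b (P *m unit_normal k).
Proof.
move=> hP k2 ac2; have s0 : Num.sqrt 2 != 0 :> R by rewrite sqrtr_eq0 -ltNge ltr0n.
exists (P *m rot2 k a c *m P^T).
exists (P *m (Num.sqrt 2 *: cv3 ((a + c) / 2 * a - 1) 0 (k * (a - c) / 2 * a))); split.
  by apply: SO3_orth_conj hP _; split; [exact: rot2_orth | exact: det_rot2].
rewrite orth_conjM // -orth_conjB1 // rot2_rank_one // tensor3_orth_conj.
by rewrite /unit_normal -!scalemxAr tensor3_scale.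
Qed.

End ThreeByThree.

Theorem mainTheorem4 (R : realType) (U V Q : 'M[R]_3) (l1 l3 : R) :
  spd3 U -> spd3 V -> U != V -> U *m V = V *m U ->
  SO3 Q -> V = Q *m U *m Q^T ->
  0 < l1 -> l1 < 1 -> 1 < l3 ->
  is_eigenvalue3 U l1 -> is_eigenvalue3 U 1 -> is_eigenvalue3 U l3 ->
  (exists e : 'cV[R]_3, e != 0 /\ U *m e = e /\ V *m e = e) ->
  l3 = Num.sqrt (2 - l1 ^+ 2) ->
  exists (Rup Rvp Rum Rvm : 'M[R]_3) (bup bvp bum bvm mp mm : 'cV[R]_3),
    [/\ SO3 Rup, SO3 Rvp, SO3 Rum & SO3 Rvm] /\
    [/\ unit_vec3 mp, unit_vec3 mm & ~ parallel3 mp mm] /\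
    [/\ Rup *m U - 1%:M = tensor3 bup mp,
        Rvp *m V - 1%:M = tensor3 bvp mp,
        Rum *m U - 1%:M = tensor3 bum mm &
        Rvm *m V - 1%:M = tensor3 bvm mm] /\
    [/\ Rup *m U - Rvp *m V = tensor3 (bup - bvp) mp &
        Rum *m U - Rvm *m V = tensor3 (bum - bvm) mm].
Proof.
move=> [sU _] _ neqUV cUV [oQ _] hV l1_gt0 l1_lt1 l3_gt1 eig1 _ eig3 e_fixed l3E.
have [P hP [hU hVP]] := commuting_conjugates_frame sU neqUV cUV oQ hV
  (negbT (lt_eqF l1_lt1)) (negbT (gt_eqF l3_gt1))
  (negbT (lt_eqF (lt_trans l1_lt1 l3_gt1))) eig1 eig3 e_fixed.
have l13 : l1 ^+ 2 + l3 ^+ 2 = 2.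
  have l1sq : l1 ^+ 2 <= 1 by rewrite exprn_ile1 ?ltW.
  rewrite l3E sqr_sqrtr; first by rewrite addrC subrK.
  by rewrite subr_ge0 (le_trans l1sq) ?ler1n.
have l31 : l3 ^+ 2 + l1 ^+ 2 = 2 by rewrite addrC.
have kp : (1 : R) ^+ 2 = 1 by rewrite expr1n.
have km : (-1 : R) ^+ 2 = 1 by rewrite sqrrN expr1n.
have [Rup [bup [SOup Eup]]] := orth_conj_rank_one_connection hP kp l13.
have [Rvp [bvp [SOvp Evp]]] := orth_conj_rank_one_connection hP kp l31.
have [Rum [bum [SOum Eum]]] := orth_conj_rank_one_connection hP km l13.
have [Rvm [bvm [SOvm Evm]]] := orth_conj_rank_one_connection hP km l31.
rewrite -hU -hVP in Eup Evp Eum Evm.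
exists Rup, Rvp, Rum, Rvm, bup, bvp, bum, bvm, (P *m unit_normal 1), (P *m unit_normal (-1)).
split=> //; split; last (split; first by split).
  split; try exact: unit_vec3_orth hP (unit_normal_unit _).
  by move/(parallel3_orth hP); exact: unit_normals_not_parallel.
by split; apply: tensor3_connection_sub.
Qed.
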